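(* Let $X=\{x_j:j\in J\}\subset\mathbb{R}^2$ be finite with $n=|J|$, quadratic min-power centre $s^*$, centroid $M$, and let $r\in J$ be such that $x_r$ is a point of $X$ farthest from $M$. Then $\|M_r-x_r\|\leq\|s^*-x_r\|$.
   Context: $s^*$ is the unique minimiser of $P(s)=\sum_{i\in J}\|s-x_i\|^2+\max_{i\in J}\|s-x_i\|^2$; $M=\frac1n\sum_ix_i$; $M_r=\frac{1}{n+1}\big(x_r+\sum_{i\in J}x_i\big)$. *)

From HB Require Import structures.
From mathcomp Require Import all_boot all_order all_algebra.
From mathcomp Require Import reals.
Set Implicit Arguments. Unset Strict Implicit. Unset Printing Implicit Defensive.
Import Order.TTheory GRing.Theory Num.Theory.
Local Open Scope ring_scope.

Definition pt (R : realType) := (R * R)%type.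

Definition dist2 (R : realType) (a b : pt R) : R :=
  (a.1 - b.1) ^+ 2 + (a.2 - b.2) ^+ 2.
Definition dist (R : realType) (a b : pt R) : R := Num.sqrt (dist2 a b).

(* P(s) = sum_{i in J} ||s - x_i||^2 + max_{i in J} ||s - x_i||^2
   (the max of nonnegative reals; base 0 is harmless for J nonempty). *)
Definition Pfun (R : realType) (J : finType) (x : J -> pt R) (s : pt R) : R :=
  \sum_(i : J) dist2 s (x i) + \big[Num.max/0]_(i : J) dist2 s (x i).

Definition centroid (R : realType) (J : finType) (x : J -> pt R) : pt R :=
  ((\sum_(i : J) (x i).1) / #|J|%:R, (\sum_(i : J) (x i).2) / #|J|%:R).

Definition Mr (R : realType) (J : finType) (x : J -> pt R) (r : J) : pt R :=
  (((x r).1 + \sum_(i : J) (x i).1) / (#|J|.+1)%:R,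
   ((x r).2 + \sum_(i : J) (x i).2) / (#|J|.+1)%:R).

From HB Require Import structures.
From mathcomp Require Import all_boot all_order all_algebra.
From mathcomp Require Import reals ring lra.
Set Implicit Arguments.
Unset Strict Implicit.
Unset Printing Implicit Defensive.
Import Order.TTheory GRing.Theory Num.Theory.
Local Open Scope ring_scope.

(* With u = M - x_r, the point M_r is characterised by
   (n+1) <s - M_r, u> = n <s - M, u> + <s - x_r, u>, which is half the derivative
   of s |-> sum_i ||s - x_i||^2 + ||s - x_r||^2 in the direction u. Because x_r is
   farthest from M, moving along u decreases ||s - x_k||^2 at least as fast as
   ||s - x_r||^2 for every k; so if <s* - M_r, u> < 0, a small step along u
   decreases every term sum + ||s - x_k||^2, hence P, contradicting the
   minimality of s*. Thus <s* - M_r, u> >= 0, and since M_r - x_r is a positive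
   multiple of u, the angle at M_r in the triangle s* M_r x_r is not acute. *)

Section Plane.

Variable R : realType.
Implicit Types (a b p q m s u v : pt R) (t : R).

Definition dot u v : R := u.1 * v.1 + u.2 * v.2.

Lemma dist2_ge0 a b : 0 <= dist2 a b.
Proof. by rewrite /dist2 addr_ge0 ?sqr_ge0. Qed.

Lemma dist2_shift s u p t :
  dist2 (s.1 + t * u.1, s.2 + t * u.2) p
  = dist2 s p + 2 * t * dot (s - p) u + t ^+ 2 * dot u u.
Proof. rewrite /dist2 /dot /=; ring. Qed.

Lemma dist2_le_obtuse p q s :
  0 <= dot (s - p) (p - q) -> dist2 p q <= dist2 s q.
Proof.
have -> : dist2 s q = dist2 s p + 2 * dot (s - p) (p - q) + dist2 p q.
  by rewrite /dist2 /dot /=; ring.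
by move=> obtuse; rewrite lerDr addr_ge0 ?dist2_ge0 ?mulr_ge0.
Qed.

Lemma dot_farthest_le0 p q m :
  dist2 q m <= dist2 p m -> dot (p - q) (m - p) <= 0.
Proof.
have -> : dist2 q m = dist2 q p + 2 * dot (p - q) (m - p) + dist2 p m.
  by rewrite /dist2 /dot /=; ring.
by have := dist2_ge0 q p; lra.
Qed.

Lemma dot_self_gt0 u v : dot v u < 0 -> 0 < dot u u.
Proof.
rewrite /dot => neg; rewrite -!expr2 lt_def addr_ge0 ?sqr_ge0 // andbT.
rewrite paddr_eq0 ?sqr_ge0 // !sqrf_eq0.
by apply: contraTN neg => /andP[/eqP-> /eqP->]; rewrite !mulr0 addr0 ltxx.
Qed.

End Plane.

Section MinPowerCentre.

Variables (R : realType) (J : finType) (x : J -> pt R).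
Hypothesis J_gt0 : (0 < #|J|)%N.

Local Notation n := (#|J|%:R : R).
Local Notation M := (centroid x).
Local Notation sumd2 s := (\sum_(i : J) dist2 s (x i)).
Implicit Types (s u v : pt R) (t : R).

Lemma card_neq0 : n != 0.
Proof. by rewrite pnatr_eq0 -lt0n. Qed.

Lemma cardS_gt0 : 0 < n + 1.
Proof. by rewrite ltr_wpDl ?ler0n. Qed.

Lemma sum_coord_centroid :
  \sum_(i : J) (x i).1 = n * M.1 /\ \sum_(i : J) (x i).2 = n * M.2.
Proof. by rewrite /centroid /= !(mulrC n) !divfK ?card_neq0. Qed.

Lemma sum_dot_centroid s u :
  \sum_(i : J) dot (s - x i) u = n * dot (s - M) u.
Proof.
have [sum1 sum2] := sum_coord_centroid; move: M sum1 sum2 => m sum1 sum2.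
under eq_bigr do rewrite /dot /= mulrBl mulrBl addrACA -opprD.
rewrite sumrB sumr_const big_split /= -!mulr_suml sum1 sum2 -mulr_natl /dot /=.
ring.
Qed.

Lemma sum_dist2_shift s u t :
  sumd2 (s.1 + t * u.1, s.2 + t * u.2)
  = sumd2 s + 2 * t * (n * dot (s - M) u) + n * t ^+ 2 * dot u u.
Proof.
under eq_bigr do rewrite dist2_shift.
rewrite !big_split /= -mulr_sumr sum_dot_centroid sumr_const -mulr_natl; ring.
Qed.

Lemma dot_sub_Mr r s u :
  (n + 1) * dot (s - Mr x r) u = n * dot (s - M) u + dot (s - x r) u.
Proof.
have [sum1 sum2] := sum_coord_centroid.
rewrite /dot /Mr /= sum1 sum2 -natr1; field.
by rewrite card_neq0 lt0r_neq0 // cardS_gt0.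
Qed.

Lemma dot_Mr_sub r v :
  (n + 1) * dot v (Mr x r - x r) = n * dot v (M - x r).
Proof.
have [sum1 sum2] := sum_coord_centroid.
rewrite /dot /Mr /= sum1 sum2 -natr1; field.
by rewrite card_neq0 lt0r_neq0 // cardS_gt0.
Qed.

Lemma term_le_Pfun s k : sumd2 s + dist2 s (x k) <= Pfun x s.
Proof. by rewrite /Pfun lerD2l (bigD1 k) //= le_max lexx. Qed.

Lemma Pfun_lt_of_terms s s' :
  (forall k, sumd2 s' + dist2 s' (x k) < Pfun x s) -> Pfun x s' < Pfun x s.
Proof.
move=> lt_s'; rewrite {1}/Pfun -ltrBrDl.
have [k0 _] := card_gt0P J_gt0.
elim/big_ind: _ => [|a b ha hb|i _].
- by rewrite ltrBrDl (le_lt_trans _ (lt_s' k0)) // addr0 lerDl dist2_ge0.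
- by rewrite gt_max ha hb.
- by rewrite ltrBrDl.
Qed.

(* The step t = -D / ((n+1) |u|^2) minimises the common quadratic upper bound
   of the terms sum + ||s - x_k||^2 along u, lowering each by at least -t D. *)
Lemma Pfun_descent s u (D : R) :
  (forall k, n * dot (s - M) u + dot (s - x k) u <= D) -> D < 0 ->
  exists s', Pfun x s' < Pfun x s.
Proof.
move=> slope D_lt0; have [k0 _] := card_gt0P J_gt0.
have uu_gt0 : 0 < dot u u.
  apply: (@dot_self_gt0 _ _ (s - Mr x k0)).
  by rewrite -(pmulr_rlt0 _ cardS_gt0) dot_sub_Mr (le_lt_trans (slope k0)).
pose t := - D / ((n + 1) * dot u u).
have t_gt0 : 0 < t by rewrite divr_gt0 ?oppr_gt0 // mulr_gt0 // cardS_gt0.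
have step : (n + 1) * t * dot u u = - D.
  by rewrite /t; field; rewrite !lt0r_neq0 // cardS_gt0.
exists (s.1 + t * u.1, s.2 + t * u.2); apply: Pfun_lt_of_terms => k.
rewrite sum_dist2_shift dist2_shift.
set d := n * dot (s - M) u + dot (s - x k) u.
have -> : sumd2 s + 2 * t * (n * dot (s - M) u) + n * t ^+ 2 * dot u u
          + (dist2 s (x k) + 2 * t * dot (s - x k) u + t ^+ 2 * dot u u)
        = sumd2 s + dist2 s (x k) + 2 * (t * d) + t * ((n + 1) * t * dot u u).
  by rewrite /d; ring.
have := term_le_Pfun s k; have := ler_wpM2l (ltW t_gt0) (slope k).
have : t * D < 0 by rewrite pmulr_rlt0.
rewrite step mulrN -/d; lra.
Qed.

Lemma Mr_first_order (sstar : pt R) (r : J) :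
  (forall s, Pfun x sstar <= Pfun x s) ->
  (forall k, dist2 (x k) M <= dist2 (x r) M) ->
  0 <= dot (sstar - Mr x r) (M - x r).
Proof.
move=> sstar_min r_far; rewrite leNgt; apply/negP => dot_lt0.
have [s' lt_s'] : exists s', Pfun x s' < Pfun x sstar.
  apply: (@Pfun_descent _ (M - x r) ((n + 1) * dot (sstar - Mr x r) (M - x r))).
    move=> k; rewrite dot_sub_Mr lerD2l.
    by have := dot_farthest_le0 (r_far k); rewrite /dot /=; lra.
  by rewrite pmulr_rlt0 // cardS_gt0.
by have := sstar_min s'; rewrite leNgt lt_s'.
Qed.

End MinPowerCentre.

Theorem lemma9 (R : realType) (J : finType) (x : J -> pt R)
  (hJ : (0 < #|J|)%N) (hx : injective x)
  (sstar : pt R) (hmin : forall s : pt R, Pfun x sstar <= Pfun x s)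
  (r : J) (hr : forall j : J, dist (x j) (centroid x) <= dist (x r) (centroid x)) :
  dist (Mr x r) (x r) <= dist sstar (x r).
Proof.
have r_far k : dist2 (x k) (centroid x) <= dist2 (x r) (centroid x).
  by have := hr k; rewrite /dist ler_sqrt // dist2_ge0.
rewrite /dist ler_sqrt ?dist2_ge0 //; apply: dist2_le_obtuse.
rewrite -(pmulr_rge0 _ (cardS_gt0 R J)) dot_Mr_sub // mulr_ge0 ?ler0n //.
exact: (Mr_first_order hJ hmin r_far).
Qed.
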